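(* If an iCRS is confluent modulo hypercollapsing subterms, i.e. for all terms $s\sim_{hc}t$ and all $s\twoheadrightarrow s'$, $t\twoheadrightarrow t'$ there are $s'',t''$ with $s'\twoheadrightarrow s''$, $t'\twoheadrightarrow t''$ and $s''\sim_{hc}t''$, then it has the properties NF, UN and UN$^\rightarrow$.
   Context: Infinitary Combinatory Reduction Systems (iCRSs). Fix a signature $\Sigma$ of function symbols of finite arity, variables, and meta-variables of each finite arity. Meta-terms are the possibly infinite trees built from variables $x$, abstractions $[x]s$, $Z(s_1,\dots,s_n)$ for meta-variables $Z$ and $f(s_1,\dots,s_n)$ for $f\in\Sigma$ (metric completion of finite meta-terms modulo $\alpha$-equivalence under $d(s,t)=2^{-k}$, $k$ least depth of difference). Terms have no meta-variables. A rewrite rule $l\to r$: $l$ a finite pattern (meta-variables applied to distinct bound variables) with function symbol at the root, $r$ a meta-term with meta-variables from $l$, both closed, $r$ without infinite chains of nested meta-variable applications. A rewrite step $C[\bar\sigma(l)]\to C[\bar\sigma(r)]$ for a valuation $\bar\sigma$ (meta-variables to substitutes $\underline{\lambda}\vec x.t$, $(\underline{\lambda}\vec x.t)(\vec t)=t[\vec x:=\vec t]$) and one-hole context $C$; $\bar\sigma(l)$ is a redex, collapsing if the right-hand side of its rule has a meta-variable at the root. A transfinite reduction $(s_\beta)_{\beta<\alpha}$ is strongly convergent if $\alpha$ is a successor ordinal and at every limit $\gamma<\alpha$, $s_\beta\to s_\gamma$ and depths of contracted redexes tend to infinity; $s\twoheadrightarrow t$ denotes such a reduction. A term $s$ is hypercollapsing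 if for every $t$ with $s\twoheadrightarrow t$ there is $t'$ with $t\twoheadrightarrow t'$ having a collapsing redex at the root. $s\sim_{hc}t$ if $t$ can be obtained from $s$ by replacing some hypercollapsing subterms of $s$ by other hypercollapsing terms. A normal form is a term containing no redex. Let $\mathrel{(\twoheadleftarrow\cdot\twoheadrightarrow)^*}$ be the reflexive, symmetric, transitive closure of $\twoheadrightarrow$. NF: $s\mathrel{(\twoheadleftarrow\cdot\twoheadrightarrow)^*}t$ with $t$ a normal form implies $s\twoheadrightarrow t$. UN: $s\mathrel{(\twoheadleftarrow\cdot\twoheadrightarrow)^*}t$ with $s,t$ normal forms implies $s=t$. UN$^\rightarrow$: $t\twoheadleftarrow s\twoheadrightarrow t'$ with $t,t'$ normal forms implies $t=t'$. *)

From mathcomp Require Import all_boot.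
From Stdlib Require Import Relations.Relation_Operators.

Set Implicit Arguments.
Unset Strict Implicit.
Unset Printing Implicit Defensive.

(* Meta-terms are possibly infinite trees, represented as
   partial labelling functions on positions (sequences of child indices).
   Alpha-equivalence is handled by de Bruijn indices: [LAbs] is the
   abstraction [x]_ (arity 1) and [LBVar j] refers to the (j+1)-th enclosing
   abstraction (indices pointing outside the tree are "dangling", i.e. refer
   to binders of the surrounding context).  [LFVar x] are free variables,
   [LMVar Z k] the meta-variable named Z of arity k. *)

Section ICRS.
Variable F : Type.
Variable ar : F -> nat.

Inductive label : Type :=
| LFun of F
| LAbs
| LBVar of nat
| LFVar of nat
| LMVar of nat & nat.

Definition arity (l : label) : nat :=
  match l with LFun f => ar f | LAbs => 1%N | LMVar _ k => k | _ => 0%N end.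

Definition tree := seq nat -> option label.

Definition wf_tree (t : tree) : Prop :=
  t [::] <> None /\
  forall p i, t (rcons p i) <> None <-> exists l, t p = Some l /\ (i < arity l)%N.

Definition is_abs (o : option label) : bool :=
  if o is Some LAbs then true else false.
Definition is_mvar (o : option label) : bool :=
  if o is Some (LMVar _ _) then true else false.

Definition is_term (t : tree) : Prop := wf_tree t /\ forall q, ~~ is_mvar (t q).

Definition absdepth (t : tree) (q : seq nat) : nat :=
  count (fun i => is_abs (t (take i q))) (iota 0 (size q)).

Definition subterm (t : tree) (p : seq nat) : tree := fun q => t (p ++ q).

Definition replace (s : tree) (p : seq nat) (u : tree) : tree := fun q =>
  if take (size p) q == p then u (drop (size p) q) else s q.

Definition shift (a : nat) (t : tree) : tree := fun q =>
  match t q with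
  | Some (LBVar j) => if (absdepth t q <= j)%N then Some (LBVar (j + a)) else Some (LBVar j)
  | o => o
  end.

(* in a substitute body of arity n, a dangling index a+k (k<n, a = local
   binder depth) denotes the k-th bound variable of the substitute *)
Definition param_at (n : nat) (body : tree) (q : seq nat) : option nat :=
  match body q with
  | Some (LBVar j) =>
      let a := absdepth body q in
      if (a <= j)%N && (j < a + n)%N then Some (j - a)%N else None
  | _ => None
  end.

(* (λ x_0..x_{n-1}. body)(args), placed under d further binders (so the
   remaining dangling indices of body are lowered by n and raised by d) *)
Definition inst (n d : nat) (body : tree) (args : nat -> tree) : tree := fun q =>
  let i := find (fun i => isSome (param_at n body (take i q))) (iota 0 (size q).+1) in
  if (i <= size q)%N then
    match param_at n body (take i q) with
    | Some k => shift (absdepth body (take i q)) (args k) (drop i q)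
    | None => None
    end
  else
    match body q with
    | Some (LBVar j) =>
        if (absdepth body q <= j)%N then Some (LBVar (j - n + d)) else Some (LBVar j)
    | o => o
    end.

(* valuations: meta-variable (name Z, arity k) |-> substitute body *)
Definition valuation := nat -> nat -> tree.
Definition valid_val (s : valuation) : Prop := forall Z k, is_term (s Z k).

Definition outermost_mvar (r : tree) (p q1 : seq nat) (Z k : nat) : Prop :=
  r (p ++ q1) = Some (LMVar Z k) /\
  forall i, (i < size q1)%N -> ~~ is_mvar (r (p ++ take i q1)).

(* u = σ(r): V p is σ applied to the sub-meta-term of r at p *)
Definition valapp (sg : valuation) (r u : tree) : Prop :=
  exists V : seq nat -> tree, V [::] = u /\
    forall p,
      (forall q1 q2 Z k, outermost_mvar r p q1 Z k ->
         V p (q1 ++ q2) =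
         inst k (absdepth r (p ++ q1)) (sg Z k) (fun j => V (p ++ rcons q1 j)) q2) /\
      (forall q, (forall i, (i <= size q)%N -> ~~ is_mvar (r (p ++ take i q))) ->
         V p q = r (p ++ q)).

Definition finite_tree (t : tree) : Prop :=
  exists N, forall q, (N < size q)%N -> t q = None.

Definition closed_mt (t : tree) : Prop :=
  (forall q j, t q = Some (LBVar j) -> (j < absdepth t q)%N) /\
  (forall q x, t q <> Some (LFVar x)).

Definition pattern (l : tree) : Prop :=
  forall q Z k, l q = Some (LMVar Z k) ->
    (forall j, (j < k)%N -> exists b, l (rcons q j) = Some (LBVar b)) /\
    (forall j1 j2 b, (j1 < k)%N -> (j2 < k)%N ->
       l (rcons q j1) = Some (LBVar b) -> l (rcons q j2) = Some (LBVar b) -> j1 = j2).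

Definition no_infinite_mvar_chain (r : tree) : Prop :=
  forall b : nat -> nat, exists N, forall n, (N <= n)%N -> ~~ is_mvar (r (mkseq b n)).

Definition rule_ok (l r : tree) : Prop :=
  wf_tree l /\ wf_tree r /\ finite_tree l /\ pattern l /\
  (exists f, l [::] = Some (LFun f)) /\
  closed_mt l /\ closed_mt r /\
  (forall q Z k, r q = Some (LMVar Z k) -> exists q', l q' = Some (LMVar Z k)) /\
  no_infinite_mvar_chain r.

Definition iCRS (R : tree -> tree -> Prop) : Prop := forall l r, R l r -> rule_ok l r.

Variable R : tree -> tree -> Prop.

Definition redex (t : tree) : Prop :=
  exists l r sg, R l r /\ valid_val sg /\ valapp sg l t.

Definition collapsing_root (t : tree) : Prop :=
  exists l r sg Z k, R l r /\ valid_val sg /\ r [::] = Some (LMVar Z k) /\ valapp sg l t.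

Definition step (s t : tree) (d : nat) : Prop :=
  is_term s /\ is_term t /\
  exists p l r sg u, size p = d /\ R l r /\ valid_val sg /\
    valapp sg l (subterm s p) /\ valapp sg r u /\ t = replace s p u.

Definition agree (n : nat) (s t : tree) : Prop :=
  forall q, (size q < n)%N -> s q = t q.

(* strongly convergent reduction s ->> t: indexed by a well-ordered type
   with a least element i0 and a greatest element top (successor length) *)
Definition red (s t : tree) : Prop :=
  exists (I : Type) (lt : I -> I -> Prop) (i0 top : I) (S : I -> tree) (D : I -> nat),
    (forall i, ~ lt i i) /\
    (forall i j k, lt i j -> lt j k -> lt i k) /\
    (forall i j, lt i j \/ i = j \/ lt j i) /\
    well_founded lt /\
    (forall i, ~ lt i i0) /\ (forall i, ~ lt top i) /\
    S i0 = s /\ S top = t /\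
    (forall i, is_term (S i)) /\
    (forall i j, lt i j -> (forall k, ~ (lt i k /\ lt k j)) -> step (S i) (S j) (D i)) /\
    (forall g, lt i0 g -> (forall i, lt i g -> exists k, lt i k /\ lt k g) ->
       forall n, exists b, lt b g /\
         forall c, ~ lt c b -> lt c g -> agree n (S c) (S g) /\ (n <= D c)%N).

Definition hypercollapsing (s : tree) : Prop :=
  is_term s /\ forall t, red s t -> exists t', red t t' /\ collapsing_root t'.

Definition hc_equiv (s t : tree) : Prop :=
  is_term s /\ is_term t /\
  exists P : seq nat -> Prop,
    (forall p p' q, P p -> P p' -> p' = p ++ q -> q = [::]) /\
    (forall p, P p -> hypercollapsing (subterm s p) /\ hypercollapsing (subterm t p)) /\
    (forall q, (forall p q', P p -> q <> p ++ q') -> s q = t q).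

Definition normal_form (t : tree) : Prop :=
  is_term t /\ forall p, ~ redex (subterm t p).

Definition conv : tree -> tree -> Prop := clos_refl_sym_trans tree red.

Definition CR_mod_hc : Prop :=
  forall s t s' t', hc_equiv s t -> red s s' -> red t t' ->
    exists s'' t'', red s' s'' /\ red t' t'' /\ hc_equiv s'' t''.

Definition NF_prop : Prop :=
  forall s t, conv s t -> normal_form t -> red s t.

Definition UN_prop : Prop :=
  forall s t, conv s t -> normal_form s -> normal_form t -> s = t.

Definition UN_arrow : Prop :=
  forall s t t', red s t -> red s t' -> normal_form t -> normal_form t' -> t = t'.

End ICRS.

(* A normal form reduces only to itself, so a hypercollapsing subterm of a
   normal form would itself have a collapsing redex at its root; hence a
   normal form has no hypercollapsing subterm and is [hc_equiv]-related only
   to itself.  Applied to [x ->> y] and [x ->> t] with [t] normal,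
   confluence modulo [hc_equiv] therefore yields [y ->> t]: reducing to a
   fixed normal form is invariant under conversion, which is NF.  UN follows
   because a normal form reduces only to itself, and UN-> is a special case
   of UN. *)

From mathcomp Require Import all_boot.
From Stdlib Require Import Relations.Relation_Operators FunctionalExtensionality ProofIrrelevance Classical.

Set Implicit Arguments.
Unset Strict Implicit.
Unset Printing Implicit Defensive.

Definition well_order (I : Type) (lt : I -> I -> Prop) : Prop :=
  (forall i, ~ lt i i) /\
  (forall i j k, lt i j -> lt j k -> lt i k) /\
  (forall i j, lt i j \/ i = j \/ lt j i) /\
  well_founded lt.

Lemma wf_minimal_above (I : Type) (lt : I -> I -> Prop) (i j : I) :
  well_founded lt -> lt i j ->
  exists m, lt i m /\ forall k, lt i k -> ~ lt k m.
Proof.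
move=> wf; elim/(well_founded_ind wf): j => j IH hij.
case: (classic (exists k, lt i k /\ lt k j)) => [[k [hik hkj]]|none].
- exact: IH hkj hik.
- by exists j; split => // k hik hkj; apply: none; exists k.
Qed.

Lemma sig_well_order (I : Type) (lt : I -> I -> Prop) (P : I -> Prop) :
  well_order lt -> well_order (fun x y : sig P => lt (proj1_sig x) (proj1_sig y)).
Proof.
move=> [irr [tr [tot wf]]].
split; first by case=> x ?; exact: irr.
split; first by case=> x ? [y ?] [z ?]; exact: tr.
split.
  case=> x hx [y hy] /=; case: (tot x y) => [|[exy|]]; auto.
  by subst y; rewrite (proof_irrelevance _ hx hy); auto.
case=> x hx; elim/(well_founded_ind wf): x hx => x IH hx.
by constructor; case=> y hy /= hyx; exact: IH.
Qed.

Section OrdinalSum.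
Variables (A B : Type) (ltA : A -> A -> Prop) (ltB : B -> B -> Prop).

Definition sum_lt (x y : A + B) : Prop :=
  match x, y with
  | inl a, inl a' => ltA a a'
  | inl _, inr _ => True
  | inr _, inl _ => False
  | inr b, inr b' => ltB b b'
  end.

Lemma sum_well_order : well_order ltA -> well_order ltB -> well_order sum_lt.
Proof.
move=> [irrA [trA [totA wfA]]] [irrB [trB [totB wfB]]].
split; first by case=> [a|b] /=; [exact: irrA|exact: irrB].
split; first by case=> [a|b] [a'|b'] [a''|b''] //=; [exact: trA|exact: trB].
split.
  case=> [a|b] [a'|b'] /=; try by auto.
  - by case: (totA a a') => [|[->|]]; auto.
  - by case: (totB b b') => [|[->|]]; auto.
have accA a : Acc sum_lt (inl a).
  induction a as [a IH] using (well_founded_ind wfA).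
  by constructor; case=> [a'|b'] /= h; [exact: IH|case: h].
case=> [a|b]; first exact: accA.
induction b as [b IH] using (well_founded_ind wfB).
by constructor; case=> [a'|b'] /= ?; [exact: accA|exact: IH].
Qed.

End OrdinalSum.

Section Reductions.
Variable F : Type.
Variable ar : F -> nat.
Variable R : tree F -> tree F -> Prop.

Notation red := (red ar R).
Notation step := (step ar R).
Notation normal_form := (normal_form ar R).

Lemma red_terms s t : red s t -> is_term ar s /\ is_term ar t.
Proof.
move=> [I [lt [i0 [top [S [D [_ [_ [_ [_ [_ [_ [<- [<- [terms _]]]]]]]]]]]]]]].
by [].
Qed.

Lemma red_refl s : is_term ar s -> red s s.
Proof.
move=> hs.
exists unit, (fun _ _ => False), tt, tt, (fun _ => s), (fun _ => 0%N).
split; first by move=> _ [].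
split; first by move=> _ _ _ [].
split; first by case; case; right; left.
split; first by move=> x; constructor.
do 2 (split; first by move=> _ []).
by do 3 (split => //); split => [_ _ []|_ []].
Qed.

(* Gluing two strongly convergent reductions: the index type is the ordinal
   sum of the first one with its last index removed and the second one. *)
Section Concatenation.
Variables (I1 I2 : Type) (lt1 : I1 -> I1 -> Prop) (lt2 : I2 -> I2 -> Prop).
Variables (a1 top1 : I1) (a2 : I2).
Variables (S1 : I1 -> tree F) (S2 : I2 -> tree F) (D1 : I1 -> nat) (D2 : I2 -> nat).
Hypothesis tr1 : forall i j k, lt1 i j -> lt1 j k -> lt1 i k.
Hypothesis tot2 : forall i j, lt2 i j \/ i = j \/ lt2 j i.
Hypothesis min2 : forall i, ~ lt2 i a2.
Hypothesis lt_a1_top1 : lt1 a1 top1.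
Hypothesis S_joint : S1 top1 = S2 a2.
Hypothesis step1 : forall i j, lt1 i j -> (forall k, ~ (lt1 i k /\ lt1 k j)) ->
  step (S1 i) (S1 j) (D1 i).
Hypothesis step2 : forall i j, lt2 i j -> (forall k, ~ (lt2 i k /\ lt2 k j)) ->
  step (S2 i) (S2 j) (D2 i).
Hypothesis lim1 : forall g, lt1 a1 g -> (forall i, lt1 i g -> exists k, lt1 i k /\ lt1 k g) ->
  forall n, exists b, lt1 b g /\
    forall c, ~ lt1 c b -> lt1 c g -> agree n (S1 c) (S1 g) /\ (n <= D1 c)%N.
Hypothesis lim2 : forall g, lt2 a2 g -> (forall i, lt2 i g -> exists k, lt2 i k /\ lt2 k g) ->
  forall n, exists b, lt2 b g /\
    forall c, ~ lt2 c b -> lt2 c g -> agree n (S2 c) (S2 g) /\ (n <= D2 c)%N.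

Definition concat_index : Type := ({i | lt1 i top1} + I2)%type.

Definition concat_lt : concat_index -> concat_index -> Prop :=
  sum_lt (fun x y : {i | lt1 i top1} => lt1 (proj1_sig x) (proj1_sig y)) lt2.

Definition concat_term (x : concat_index) : tree F :=
  match x with inl i => S1 (proj1_sig i) | inr j => S2 j end.

Definition concat_depth (x : concat_index) : nat :=
  match x with inl i => D1 (proj1_sig i) | inr j => D2 j end.

Lemma concat_step x y : concat_lt x y ->
  (forall k, ~ (concat_lt x k /\ concat_lt k y)) ->
  step (concat_term x) (concat_term y) (concat_depth x).
Proof.
case: x y => [[i hi]|i] [[j hj]|j] //= hij adj.
- apply: step1 => // k [hik hkj].
  by apply: (adj (inl (exist _ k (tr1 hkj hj)))).
- have -> : j = a2.
    case: (tot2 a2 j) => [ha2j|[//|hja2]]; last by case: (min2 hja2).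
    by case: (adj (inr a2)).
  rewrite -S_joint; apply: step1 => // k [hik hktop].
  by apply: (adj (inl (exist _ k hktop))).
- by apply: step2 => // k [hik hkj]; apply: (adj (inr k)).
Qed.

(* A limit index of the glued reduction is either a limit of the first
   reduction, a limit of the second one, or the junction itself, which is a
   limit exactly when [top1] is. *)
Lemma concat_limit g : concat_lt (inl (exist _ a1 lt_a1_top1)) g ->
  (forall i, concat_lt i g -> exists k, concat_lt i k /\ concat_lt k g) ->
  forall n, exists b, concat_lt b g /\
    forall c, ~ concat_lt c b -> concat_lt c g ->
      agree n (concat_term c) (concat_term g) /\ (n <= concat_depth c)%N.
Proof.
case: g => [[g hg]|g] /= ha1g lim n.
- have lim1' i : lt1 i g -> exists k, lt1 i k /\ lt1 k g.
    move=> hig; case: (lim (inl (exist _ i (tr1 hig hg))) hig) => [[[k ?]|?] []] //.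
    by exists k.
  case: (lim1 ha1g lim1' n) => b [hbg H].
  exists (inl (exist _ b (tr1 hbg hg))); split => //.
  by case=> [[c ?]|c] //=; exact: H.
case: (tot2 a2 g) => [ha2g|[eg|hga2]]; last by case: (min2 hga2).
- have lim2' i : lt2 i g -> exists k, lt2 i k /\ lt2 k g.
    by move=> hig; case: (lim (inr i) hig) => [[[k ?]|k] []] //; exists k.
  case: (lim2 ha2g lim2' n) => b [hbg H].
  exists (inr b); split => //.
  by case=> [[c ?]|c] /= hcb hcg; [case: hcb|exact: H].
- subst g.
  have lim1' i : lt1 i top1 -> exists k, lt1 i k /\ lt1 k top1.
    move=> hi; case: (lim (inl (exist _ i hi)) I) => [[[k ?]|k] [? hka2]] /=.
    + by exists k.
    + by case: (min2 hka2).
  case: (lim1 lt_a1_top1 lim1' n) => b [hb H].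
  exists (inl (exist _ b hb)); split => //.
  case=> [[c ?]|c] /= hcb hcg; last by case: (min2 hcg).
  by rewrite -S_joint; exact: H.
Qed.

End Concatenation.

Lemma red_trans s u t : red s u -> red u t -> red s t.
Proof.
move=> [I1 [lt1 [a1 [top1 [S1 [D1 [irr1 [tr1 [tot1 [wf1 [min1 [_
  [S1a [S1t [terms1 [step1 lim1]]]]]]]]]]]]]]]].
have [ea1|ha1] : a1 = top1 \/ lt1 a1 top1.
  by case: (tot1 a1 top1) => [|[|h]]; auto; case: (min1 _ h).
  by rewrite -S1a -S1t ea1.
move=> [I2 [lt2 [a2 [top2 [S2 [D2 [irr2 [tr2 [tot2 [wf2 [min2 [max2
  [S2a [S2t [terms2 [step2 lim2]]]]]]]]]]]]]]]].
have joint : S1 top1 = S2 a2 by rewrite S1t S2a.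
have [irr [tr [tot wf]]] : well_order (@concat_lt I1 I2 lt1 lt2 top1).
  by apply: sum_well_order; [apply: sig_well_order|]; do 3 (split => //).
exists (@concat_index I1 I2 lt1 top1), (@concat_lt I1 I2 lt1 lt2 top1),
  (inl (exist _ a1 ha1)), (inr top2),
  (@concat_term I1 I2 lt1 top1 S1 S2), (@concat_depth I1 I2 lt1 top1 D1 D2).
do 4 (split; first by []).
split; first by case=> [[i ?]|j] //=; exact: min1.
split; first by case=> [[i ?]|j] //=; exact: max2.
split; first exact: S1a.
split; first exact: S2t.
split; first by case=> [[i ?]|j]; [exact: terms1|exact: terms2].
split; first exact: concat_step.
exact: concat_limit.
Qed.

Lemma nf_red s t : (forall p, ~ redex ar R (subterm s p)) -> red s t -> t = s.
Proof.
move=> nf [I [lt [i0 [top [S [D [_ [_ [tot [wf [min [_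
  [Si0 [<- [_ [steps _]]]]]]]]]]]]]]]]; subst s.
case: (tot i0 top) => [h|[->//|h]]; last by case: (min _ h).
have [m [hi0m first]] := wf_minimal_above wf h.
have [_ [_ [p [l [r [sg [u [_ [Rlr [vsg [va _]]]]]]]]]]] :=
  steps i0 m hi0m (fun k hk => first k hk.1 hk.2).
by case: (nf p); exists l, r, sg.
Qed.

Lemma normal_form_not_hypercollapsing t p :
  normal_form t -> ~ hypercollapsing ar R (subterm t p).
Proof.
move=> [_ nf] [hterm hc].
have nf_sub q : ~ redex ar R (subterm (subterm t p) q).
  have -> : subterm (subterm t p) q = subterm t (p ++ q).
    by apply: functional_extensionality => x; rewrite /subterm catA.
  exact: nf.
have [t' [red_t' [l [r [sg [Z [k [Rlr [vsg [_ va]]]]]]]]]] := hc _ (red_refl hterm).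
rewrite (nf_red nf_sub red_t') in va.
by apply: (nf p); exists l, r, sg.
Qed.

Lemma hc_equiv_refl x : is_term ar x -> hc_equiv ar R x x.
Proof. by move=> hx; do 2 (split => //); exists (fun _ => False). Qed.

Lemma hc_equiv_nf_eq x t : hc_equiv ar R x t -> normal_form t -> x = t.
Proof.
move=> [_ [_ [P [_ [hcP eqP]]]]] nft.
apply: functional_extensionality => q; apply: eqP => p q' hp _.
exact: (normal_form_not_hypercollapsing nft (hcP p hp).2).
Qed.

Section ConfluenceModuloHc.
Hypothesis CR : CR_mod_hc ar R.

Lemma reduct_red_nf x y t : normal_form t -> red x y -> red x t -> red y t.
Proof.
move=> nft hxy hxt.
have [y' [t' [hyy' [htt' hc]]]] := CR (hc_equiv_refl (red_terms hxy).1) hxy hxt.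
rewrite (nf_red nft.2 htt') in hc.
by rewrite -(hc_equiv_nf_eq hc nft).
Qed.

Lemma conv_red_nf x y t : normal_form t -> conv ar R x y -> (red x t <-> red y t).
Proof.
move=> nft; elim=> {x y} [x y hxy| x | x y _ IH | x y z _ IH1 _ IH2]; try tauto.
by split; [exact: reduct_red_nf|exact: red_trans].
Qed.

Lemma CR_mod_hc_NF : NF_prop ar R.
Proof. by move=> s t hst nft; apply/(conv_red_nf nft hst)/red_refl; case: nft. Qed.

Lemma CR_mod_hc_UN : UN_prop ar R.
Proof. by move=> s t hst [_ nfs] nft; rewrite (nf_red nfs (CR_mod_hc_NF hst nft)). Qed.

End ConfluenceModuloHc.

Lemma UN_UN_arrow : UN_prop ar R -> UN_arrow ar R.
Proof.
move=> UN s t t' hst hst' nft nft'; apply: UN nft nft'.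
by apply: (rst_trans _ _ _ s); [apply: rst_sym|]; apply: rst_step.
Qed.

End Reductions.

Theorem lemma5p4 (F : Type) (ar : F -> nat) (R : tree F -> tree F -> Prop) :
  iCRS ar R -> CR_mod_hc ar R -> NF_prop ar R /\ UN_prop ar R /\ UN_arrow ar R.
Proof.
move=> _ CR.
have UN := CR_mod_hc_UN CR.
by split; [exact: CR_mod_hc_NF|split; [exact: UN|exact: UN_UN_arrow]].
Qed.
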